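(* The set $\{A\in\mathbb{A}\cap [e^{-e}, e^{1/e}] : h(A) \text{ is algebraic}\}$ is dense in $[e^{-e},e^{1/e}]$.
   Context: $\mathbb{A}$ denotes the set of algebraic numbers. For a real $x\in[e^{-e},e^{1/e}]$, the sequence $x,\ x^x,\ x^{x^x},\ldots$ converges; its limit is denoted $h(x)$, and it satisfies $h(x)=x^{h(x)}$, $1/e\leq h(x)\leq e$. *)

From Stdlib Require Import Reals List ZArith.
Open Scope R_scope.

(* Evaluation of an integer-coefficient polynomial given by its list of
   coefficients [c0; c1; ...; cn] (lowest degree first) at x. *)
Definition zpoly_eval (l : list Z) (x : R) : R :=
  fold_right (fun c acc => IZR c + x * acc) 0 l.

Definition is_algebraic (x : R) : Prop :=
  exists l : list Z, (exists c, In c l /\ c <> 0%Z) /\ zpoly_eval l x = 0.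

Fixpoint tower (x : R) (n : nat) : R :=
  match n with
  | O => x
  | S m => Rpower x (tower x m)
  end.

Definition tower_lo : R := exp (- exp 1).
Definition tower_hi : R := exp (/ exp 1).

From Stdlib Require Import Reals List ZArith Lra Lia Psatz.
Open Scope R_scope.

(* The map r |-> r^(1/r) sends [1/e, e] continuously onto [e^(-e), e^(1/e)], and for
   1/e < r < e the tower of A = r^(1/r) converges to r: for r >= 1 it increases to a
   fixed point of x |-> A^x, which is r because ln x / x is injective below e; for r < 1
   its even and odd subsequences converge to a 2-cycle of x |-> A^x, which is trivial
   because ln (- ln z) + z (- ln A) is strictly decreasing on (0, 1) when - ln A < e.
   For rational r = n/m both r and A (a root of m^m X^n - n^m) are algebraic, and
   rationals are dense. *)

Lemma exp_le_mono x y : x <= y -> exp x <= exp y.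
Proof. intros [Hlt | ->]; [left; apply exp_increasing |]; lra. Qed.

Lemma ln_le_sub1 x : 0 < x -> ln x <= x - 1.
Proof. intros Hx. pose proof (exp_ineq1_le (ln x)) as H. rewrite exp_ln in H; lra. Qed.

Lemma ln_le_div_e y : 0 < y -> ln y <= y / exp 1.
Proof.
  intros Hy. pose proof (exp_pos 1) as He.
  assert (Hq : 0 < y / exp 1) by (apply Rdiv_lt_0_compat; lra).
  pose proof (ln_le_sub1 _ Hq) as H.
  unfold Rdiv in H. rewrite ln_mult, ln_Rinv, ln_exp in H by (try apply Rinv_0_lt_compat; lra).
  unfold Rdiv. lra.
Qed.

Lemma mul_opp_ln_le_inv_e z : 0 < z -> z * - ln z <= / exp 1.
Proof.
  intros Hz. pose proof (exp_pos 1) as He.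
  assert (Hiz : 0 < / z) by (apply Rinv_0_lt_compat; lra).
  pose proof (ln_le_div_e _ Hiz) as H. rewrite ln_Rinv in H by lra.
  apply (Rmult_le_compat_l z) in H; [| lra].
  replace (z * (/ z / exp 1)) with (/ exp 1) in H by (field; lra). exact H.
Qed.

Lemma ln_div_increasing x y : 0 < x -> x < y -> y < exp 1 -> ln x / x < ln y / y.
Proof.
  intros Hx Hxy Hy.
  set (t := y / x).
  assert (Ht : 1 < t) by (apply (Rmult_lt_reg_r x); unfold t; [lra | field_simplify; lra]).
  assert (Hyt : y = x * t) by (unfold t; field; lra).
  assert (Hlny : ln y = ln x + ln t) by (rewrite Hyt, ln_mult; lra).
  assert (Hln1 : ln y < 1) by (rewrite <- (ln_exp 1); apply ln_increasing; lra).
  (* [ln t >= 1 - 1/t] and [ln x < 1 - ln t] give [(t - 1) ln x < ln t]. *)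
  assert (Hlnt : 1 - / t <= ln t).
  { assert (Hit : 0 < / t) by (apply Rinv_0_lt_compat; lra).
    pose proof (ln_le_sub1 _ Hit) as H. rewrite ln_Rinv in H; lra. }
  assert (Htt : t * (1 - / t) = t - 1) by (field; lra).
  assert (Hmain : ln x * (t - 1) < ln t) by nra.
  apply (Rmult_lt_reg_r (x * y)); [nra |].
  replace (ln x / x * (x * y)) with (ln x * y) by (field; lra).
  replace (ln y / y * (x * y)) with (ln y * x) by (field; lra).
  rewrite Hlny, Hyt. nra.
Qed.

Lemma Un_cv_le_bound u l b : Un_cv u l -> (forall n, u n <= b) -> l <= b.
Proof.
  intros Hu Hb. destruct (Rle_or_lt l b) as [H | H]; [exact H |].
  destruct (Hu (l - b)) as [N HN]; [lra |].
  specialize (HN N (le_n N)). specialize (Hb N).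
  unfold R_dist in HN. apply Rabs_def2 in HN. lra.
Qed.

Lemma Un_cv_ge_bound u l b : Un_cv u l -> (forall n, b <= u n) -> b <= l.
Proof.
  intros Hu Hb. destruct (Rle_or_lt b l) as [H | H]; [exact H |].
  destruct (Hu (b - l)) as [N HN]; [lra |].
  specialize (HN N (le_n N)). specialize (Hb N).
  unfold R_dist in HN. apply Rabs_def2 in HN. lra.
Qed.

Lemma Un_cv_shift u l : Un_cv u l -> Un_cv (fun n => u (S n)) l.
Proof. intros H eps Heps. destruct (H eps Heps) as [N HN]. exists N. intros n Hn. apply HN; lia. Qed.

Lemma Un_cv_even_odd u l :
  Un_cv (fun k => u (2 * k)%nat) l -> Un_cv (fun k => u (S (2 * k))) l -> Un_cv u l.
Proof.
  intros Hev Hodd eps Heps.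
  destruct (Hev eps Heps) as [N1 HN1]. destruct (Hodd eps Heps) as [N2 HN2].
  exists (2 * (N1 + N2) + 1)%nat. intros n Hn.
  destruct (even_odd_cor n) as [p [-> | ->]]; [apply HN1 | apply HN2]; lia.
Qed.

Lemma Un_cv_iter_fixpoint f u l :
  (forall n, u (S n) = f (u n)) -> continuity_pt f l -> Un_cv u l -> f l = l.
Proof.
  intros Hrec Hf Hu. apply (UL_sequence (fun n => f (u n))).
  - exact (continuity_seq f u l Hf Hu).
  - apply (Un_cv_ext (fun n => u (S n))); [exact Hrec | exact (Un_cv_shift u l Hu)].
Qed.

Lemma continuity_pt_near f x0 eps :
  continuity_pt f x0 -> 0 < eps ->
  exists del, 0 < del /\ forall x, Rabs (x - x0) < del -> Rabs (f x - f x0) < eps.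
Proof.
  intros Hf Heps. destruct (Hf eps Heps) as [del [Hdel Hnear]].
  exists del. split; [exact Hdel |]. intros x Hx.
  destruct (Req_dec x x0) as [-> | Hne].
  - rewrite Rminus_diag, Rabs_R0. exact Heps.
  - apply (Hnear x). split; [split; [exact I | auto] | exact Hx].
Qed.

Lemma Rpower_pos A y : 0 < Rpower A y.
Proof. apply exp_pos. Qed.

Lemma Rpower_continuous_exponent A y : continuity_pt (Rpower A) y.
Proof. unfold Rpower. reg. Qed.

Lemma Rpower_le_antitone A y z : 0 < A <= 1 -> y <= z -> Rpower A z <= Rpower A y.
Proof.
  intros [HA0 HA1] Hyz.
  assert (ln A <= 0).
  { destruct HA1 as [HA1 | ->]; [left; rewrite <- ln_1; apply ln_increasing | rewrite ln_1]; lra. }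
  apply exp_le_mono. nra.
Qed.

Definition self_root (r : R) : R := Rpower r (/ r).

Lemma ln_self_root r : ln (self_root r) = ln r / r.
Proof. unfold self_root, Rdiv. rewrite ln_Rpower. ring. Qed.

Lemma self_root_fixpoint r : 0 < r -> Rpower (self_root r) r = r.
Proof. intros Hr. unfold self_root. rewrite Rpower_mult, Rinv_l by lra. apply Rpower_1; lra. Qed.

Lemma self_root_continuous r : 0 < r -> continuity_pt self_root r.
Proof.
  intros Hr. unfold self_root, Rpower.
  apply continuity_pt_comp with (f1 := fun z => / z * ln z); [| reg].
  apply continuity_pt_mult.
  - apply continuity_pt_inv; [reg | lra].
  - apply derivable_continuous_pt. exists (/ r). apply derivable_pt_lim_ln; exact Hr.
Qed.

Lemma self_root_range r : exp (-1) <= r -> tower_lo <= self_root r <= tower_hi.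
Proof.
  intros Hr. pose proof (exp_pos (-1)) as He0. pose proof (exp_pos 1) as He1.
  assert (Hinv : / r <= exp 1).
  { replace (exp 1) with (/ exp (-1)) by (rewrite <- exp_Ropp; f_equal; ring).
    apply Rinv_le_contravar; lra. }
  assert (Hln : -1 <= ln r).
  { destruct Hr as [Hr | <-]; [left; rewrite <- (ln_exp (-1)); apply ln_increasing |
      rewrite ln_exp]; lra. }
  assert (Hir : 0 < / r) by (apply Rinv_0_lt_compat; lra).
  unfold tower_lo, tower_hi, self_root, Rpower. split; apply exp_le_mono.
  - destruct (Rle_or_lt 0 (ln r)); nra.
  - pose proof (ln_le_div_e r ltac:(lra)) as H.
    apply (Rmult_le_compat_l (/ r)) in H; [| lra].
    replace (/ r * (r / exp 1)) with (/ exp 1) in H by (field; lra). exact H.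
Qed.

Lemma self_root_surjective a :
  tower_lo <= a <= tower_hi -> exists r, exp (-1) <= r <= exp 1 /\ self_root r = a.
Proof.
  intros [Hlo Hhi].
  assert (He : exp (-1) < exp 1) by (apply exp_increasing; lra).
  pose proof (exp_pos (-1)) as He0.
  assert (Hlo_eq : self_root (exp (-1)) = tower_lo).
  { unfold self_root, Rpower, tower_lo. rewrite ln_exp, <- exp_Ropp. f_equal. replace (- -1) with 1 by ring. ring. }
  assert (Hhi_eq : self_root (exp 1) = tower_hi).
  { unfold self_root, Rpower, tower_hi. rewrite ln_exp. f_equal. ring. }
  destruct Hlo as [Hlo | <-]; [| exists (exp (-1)); split; [lra | exact Hlo_eq]].
  destruct Hhi as [Hhi | ->]; [| exists (exp 1); split; [lra | exact Hhi_eq]].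
  destruct (Ranalysis5.IVT_interv (fun z => self_root z - a) (exp (-1)) (exp 1)) as [r [Hr Hfr]];
    [| exact He | rewrite Hlo_eq; lra | rewrite Hhi_eq; lra |].
  - intros z Hz. apply continuity_pt_minus; [apply self_root_continuous; lra | apply continuity_pt_const].
    intros u v; reflexivity.
  - exists r. split; [exact Hr | lra].
Qed.

Section TowerBaseGe1.

Variable A : R.
Hypothesis HA : 1 <= A.

Lemma tower_growing : Un_growing (tower A).
Proof.
  intro n; induction n as [| n IH]; simpl.
  - rewrite <- (Rpower_1 A) at 1 by lra. apply Rle_Rpower; lra.
  - apply Rle_Rpower; [lra | exact IH].
Qed.

Lemma tower_le_fixpoint r : A <= r -> Rpower A r = r -> forall n, tower A n <= r.
Proof.
  intros HAr Hfix n; induction n as [| n IH]; simpl; [exact HAr |].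
  rewrite <- Hfix. apply Rle_Rpower; lra.
Qed.

End TowerBaseGe1.

Lemma tower_self_root_cv_ge1 r : 1 <= r < exp 1 -> Un_cv (tower (self_root r)) r.
Proof.
  intros [Hr1 Hre].
  set (A := self_root r).
  assert (Hln : 0 <= ln r).
  { destruct Hr1 as [Hr1 | <-]; [left; rewrite <- ln_1; apply ln_increasing | rewrite ln_1]; lra. }
  assert (Hir : 0 < / r <= 1).
  { split; [apply Rinv_0_lt_compat; lra | rewrite <- Rinv_1; apply Rinv_le_contravar; lra]. }
  assert (HA1 : 1 <= A).
  { unfold A, self_root, Rpower. rewrite <- exp_0. apply exp_le_mono. nra. }
  assert (HAr : A <= r).
  { rewrite <- (exp_ln r) by lra. unfold A, self_root, Rpower. apply exp_le_mono. nra. }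
  assert (Hfix : Rpower A r = r) by (apply self_root_fixpoint; lra).
  destruct (growing_cv _ (tower_growing A HA1)) as [L HL].
  { exists r. intros x [n ->]. apply tower_le_fixpoint; assumption. }
  assert (HLr : L <= r).
  { apply (Un_cv_le_bound _ _ _ HL). apply tower_le_fixpoint; assumption. }
  assert (HAL : A <= L) by exact (growing_ineq _ _ (tower_growing A HA1) HL 0).
  assert (HfixL : Rpower A L = L).
  { apply (Un_cv_iter_fixpoint (Rpower A) (tower A)); [reflexivity | | exact HL].
    apply Rpower_continuous_exponent. }
  replace r with L; [exact HL |].
  destruct HLr as [HLr | ->]; [exfalso | reflexivity].
  (* Both [L] and [r] are fixed points of [Rpower A], so [ln L / L = ln A = ln r / r]. *)
  assert (HlnL : ln L / L = ln A) by (rewrite <- HfixL at 1; rewrite ln_Rpower; field; lra).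
  unfold A in HlnL. rewrite ln_self_root in HlnL.
  pose proof (ln_div_increasing L r ltac:(lra) HLr Hre). lra.
Qed.

Section TowerBaseLe1.

Variable A : R.
Hypothesis HA : 0 < A <= 1.

Lemma tower_even_increasing k : tower A (2 * k) <= tower A (2 * S k).
Proof.
  induction k as [| k IH].
  - simpl. rewrite <- (Rpower_1 A) at 1 by lra.
    apply Rpower_le_antitone; [exact HA |].
    rewrite <- (Rpower_O A) by lra. apply Rpower_le_antitone; lra.
  - replace (2 * S (S k))%nat with (S (S (S (S (2 * k))))) by lia.
    replace (2 * S k)%nat with (S (S (2 * k))) in * by lia.
    apply Rpower_le_antitone; [exact HA |].
    apply Rpower_le_antitone; [exact HA | exact IH].
Qed.

Lemma tower_odd_decreasing k : tower A (S (2 * S k)) <= tower A (S (2 * k)).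
Proof. apply Rpower_le_antitone; [exact HA | apply tower_even_increasing]. Qed.

Lemma tower_alternates r :
  Rpower A r = r -> forall k, tower A (2 * k) <= r <= tower A (S (2 * k)).
Proof.
  intros Hfix.
  assert (Hr1 : r <= 1).
  { rewrite <- Hfix, <- (Rpower_O A) by lra. apply Rpower_le_antitone; [exact HA |].
    rewrite <- Hfix. left; apply Rpower_pos. }
  assert (Hflip_le : forall x, x <= r -> r <= Rpower A x).
  { intros x Hx. rewrite <- Hfix at 1. apply Rpower_le_antitone; assumption. }
  assert (Hflip_ge : forall x, r <= x -> Rpower A x <= r).
  { intros x Hx. rewrite <- Hfix. apply Rpower_le_antitone; assumption. }
  assert (HAr : A <= r).
  { apply Rle_trans with (Rpower A r); [| lra].
    rewrite <- (Rpower_1 A) at 1 by lra. apply Rpower_le_antitone; assumption. }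
  intro k; induction k as [| k [IHeven IHodd]].
  - split; [exact HAr | apply Hflip_le; exact HAr].
  - replace (2 * S k)%nat with (S (S (2 * k))) by lia.
    split; [apply Hflip_ge, IHodd | apply Hflip_le, Hflip_ge, IHodd].
Qed.

End TowerBaseLe1.

Lemma ln_opp_ln_add_decreasing c x y :
  0 < c < exp 1 -> 0 < x -> x < y -> y < 1 -> ln (- ln y) + c * y < ln (- ln x) + c * x.
Proof.
  intros Hc Hx Hxy Hy.
  destruct (MVT_cor2 (fun z => ln (- ln z) + c * z) (fun z => / (- ln z) * (- / z) + c * 1)
              x y Hxy) as [xi [Hmvt Hxi]].
  { intros z Hz. assert (Hlnz : ln z < 0) by (rewrite <- ln_1; apply ln_increasing; lra).
    apply (derivable_pt_lim_plus (fun z => ln (- ln z)) (fun z => c * z)).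
    - apply (derivable_pt_lim_comp (fun z => - ln z) ln).
      + apply (derivable_pt_lim_opp ln). apply derivable_pt_lim_ln; lra.
      + apply derivable_pt_lim_ln; lra.
    - apply (derivable_pt_lim_scal id). apply derivable_pt_lim_id. }
  assert (Hlnxi : ln xi < 0) by (rewrite <- ln_1; apply ln_increasing; lra).
  assert (Hderiv : / (- ln xi) * (- / xi) + c * 1 < 0).
  { pose proof (mul_opp_ln_le_inv_e xi ltac:(lra)) as H.
    replace (/ (- ln xi) * (- / xi)) with (- / (xi * - ln xi)) by (field; lra).
    assert (exp 1 <= / (xi * - ln xi)).
    { rewrite <- (Rinv_inv (exp 1)). apply Rinv_le_contravar; [nra | exact H]. }
    lra. }
  nra.
Qed.

Lemma two_cycle_exp_trivial c x y :
  0 < c < exp 1 -> 0 < x -> 0 < y -> ln y = - c * x -> ln x = - c * y -> x = y.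
Proof.
  intros Hc Hx Hy Hlny Hlnx.
  assert (Hx1 : x < 1) by (apply ln_lt_inv; [lra | lra | rewrite ln_1; nra]).
  assert (Hy1 : y < 1) by (apply ln_lt_inv; [lra | lra | rewrite ln_1; nra]).
  (* Both points of the cycle lie on the level set [ln (- ln z) + c z = ln c]. *)
  assert (Hlevel : forall z w, 0 < w -> ln z = - c * w -> ln w = - c * z ->
                     ln (- ln z) + c * z = ln c).
  { intros z w Hw Hz Hw'. rewrite Hz. replace (- (- c * w)) with (c * w) by ring.
    rewrite ln_mult, Hw' by lra. ring. }
  pose proof (Hlevel x y Hy Hlnx Hlny) as Hx_level.
  pose proof (Hlevel y x Hx Hlny Hlnx) as Hy_level.
  destruct (Rtotal_order x y) as [Hxy | [Hxy | Hxy]]; [exfalso | exact Hxy | exfalso].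
  - pose proof (ln_opp_ln_add_decreasing c x y Hc Hx Hxy Hy1). lra.
  - pose proof (ln_opp_ln_add_decreasing c y x Hc Hy Hxy Hx1). lra.
Qed.

Lemma tower_self_root_cv_lt1 r : exp (-1) < r < 1 -> Un_cv (tower (self_root r)) r.
Proof.
  intros [Hr1 Hr2]. pose proof (exp_pos (-1)) as He0.
  set (A := self_root r).
  assert (Hlnr : -1 < ln r < 0).
  { split; [rewrite <- (ln_exp (-1)) | rewrite <- ln_1]; apply ln_increasing; lra. }
  assert (Hir : 1 < / r < exp 1).
  { split; [rewrite <- Rinv_1; apply Rinv_lt_contravar; lra |].
    replace (exp 1) with (/ exp (-1)) by (rewrite <- exp_Ropp; f_equal; ring).
    apply Rinv_lt_contravar; nra. }
  assert (HlnA : ln A = ln r / r) by apply ln_self_root.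
  assert (HA : 0 < A <= 1).
  { split; [apply Rpower_pos |]. left.
    unfold A, self_root, Rpower. rewrite <- exp_0. apply exp_increasing. nra. }
  assert (Hfix : Rpower A r = r) by (apply self_root_fixpoint; lra).
  set (u := fun k => tower A (2 * k)). set (v := fun k => tower A (S (2 * k))).
  assert (Hu : Un_growing u) by (intro k; apply tower_even_increasing, HA).
  assert (Hv : Un_decreasing v) by (intro k; apply tower_odd_decreasing, HA).
  pose proof (tower_alternates A HA r Hfix) as Halt.
  destruct (growing_cv u Hu) as [L1 Hcv1].
  { exists r. intros x [k ->]. apply Halt. }
  destruct (decreasing_cv v Hv) as [L2 Hcv2].
  { exists (- r). intros x [k ->]. unfold opp_seq, v. pose proof (Halt k). lra. }
  assert (HL1r : L1 <= r) by (apply (Un_cv_le_bound u _ _ Hcv1); intro k; apply Halt).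
  assert (HL2r : r <= L2) by (apply (Un_cv_ge_bound v _ _ Hcv2); intro k; apply Halt).
  assert (HL1 : 0 < L1).
  { pose proof (growing_ineq u L1 Hu Hcv1 0) as H. unfold u in H. simpl in H. lra. }
  assert (Hcycle2 : L2 = Rpower A L1).
  { apply (UL_sequence v); [exact Hcv2 |].
    exact (continuity_seq (Rpower A) u L1 (Rpower_continuous_exponent A L1) Hcv1). }
  assert (Hcycle1 : L1 = Rpower A L2).
  { apply (UL_sequence (fun k => u (S k))); [exact (Un_cv_shift u L1 Hcv1) |].
    apply (Un_cv_ext (fun k => Rpower A (v k))).
    - intro k. unfold u, v. replace (2 * S k)%nat with (S (S (2 * k))) by lia. reflexivity.
    - exact (continuity_seq (Rpower A) v L2 (Rpower_continuous_exponent A L2) Hcv2). }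
  assert (HL12 : L1 = L2).
  { apply (two_cycle_exp_trivial (- ln A)); [| lra | lra | |].
    - rewrite HlnA. unfold Rdiv. split; nra.
    - rewrite Hcycle2, ln_Rpower. ring.
    - rewrite Hcycle1, ln_Rpower. ring. }
  apply Un_cv_even_odd.
  - replace r with L1 by lra. exact Hcv1.
  - replace r with L2 by lra. exact Hcv2.
Qed.

Lemma tower_self_root_cv r : exp (-1) < r < exp 1 -> Un_cv (tower (self_root r)) r.
Proof.
  intros Hr. destruct (Rlt_or_le r 1).
  - apply tower_self_root_cv_lt1; lra.
  - apply tower_self_root_cv_ge1; lra.
Qed.

Lemma zpoly_eval_monomial k c x : zpoly_eval (repeat 0%Z k ++ c :: nil) x = x ^ k * IZR c.
Proof. induction k as [| k IH]; simpl; [ring |]. unfold zpoly_eval in *. rewrite IH. ring. Qed.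

Lemma is_algebraic_pow_eq x k a b : b <> 0%Z -> x ^ S k * IZR b = IZR a -> is_algebraic x.
Proof.
  intros Hb Heq. exists ((- a)%Z :: repeat 0%Z k ++ b :: nil). split.
  - exists b. split; [right; apply in_or_app; right; left; reflexivity | exact Hb].
  - change (IZR (- a) + x * zpoly_eval (repeat 0%Z k ++ b :: nil) x = 0).
    rewrite zpoly_eval_monomial, opp_IZR, <- Heq. simpl. ring.
Qed.

Lemma is_algebraic_ratio n m : (0 < m)%nat -> is_algebraic (INR n / INR m).
Proof.
  intros Hm. assert (0 < INR m) by (apply lt_0_INR; exact Hm).
  apply (is_algebraic_pow_eq _ 0 (Z.of_nat n) (Z.of_nat m)); [lia |].
  rewrite <- !INR_IZR_INZ. field. lra.
Qed.

Lemma is_algebraic_self_root_ratio n m :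
  (0 < n)%nat -> (0 < m)%nat -> is_algebraic (self_root (INR n / INR m)).
Proof.
  intros Hn Hm.
  assert (Hn' : 0 < INR n) by (apply lt_0_INR; exact Hn).
  assert (Hm' : 0 < INR m) by (apply lt_0_INR; exact Hm).
  set (r := INR n / INR m).
  assert (Hr : 0 < r) by (apply Rdiv_lt_0_compat; assumption).
  assert (Hpow : self_root r ^ n = r ^ m).
  { unfold self_root. rewrite <- Rpower_pow by apply Rpower_pos.
    rewrite Rpower_mult. replace (/ r * INR n) with (INR m) by (unfold r; field; lra).
    apply Rpower_pow; exact Hr. }
  destruct n as [| k]; [lia |].
  apply (is_algebraic_pow_eq _ k (Z.of_nat (S k) ^ Z.of_nat m) (Z.of_nat m ^ Z.of_nat m)).
  - apply Z.pow_nonzero; lia.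
  - rewrite Hpow, <- !pow_IZR, <- !INR_IZR_INZ, <- Rpow_mult_distr.
    f_equal. unfold r. field. lra.
Qed.

Lemma exists_ratio_between x y :
  0 <= x -> x < y -> exists n m : nat, (0 < n)%nat /\ (0 < m)%nat /\ x < INR n / INR m < y.
Proof.
  intros Hx Hxy.
  assert (Hyx : 0 < / (y - x)) by (apply Rinv_0_lt_compat; lra).
  destruct (archimed (/ (y - x))) as [Hm _].
  assert (Hzm : (0 < up (/ (y - x)))%Z) by (apply lt_0_IZR; lra).
  set (M := IZR (up (/ (y - x)))) in *.
  assert (HM : 1 < M * (y - x)).
  { replace 1 with (/ (y - x) * (y - x)) by (field; lra). apply Rmult_lt_compat_r; lra. }
  destruct (archimed (x * M)) as [Hn1 Hn2].
  assert (Hzn : (0 < up (x * M))%Z) by (apply lt_0_IZR; nra).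
  exists (Z.to_nat (up (x * M))), (Z.to_nat (up (/ (y - x)))).
  split; [lia | split; [lia |]].
  rewrite !INR_IZR_INZ, !Z2Nat.id by lia. fold M.
  split; apply (Rmult_lt_reg_r M); try lra; unfold Rdiv; rewrite Rmult_assoc, Rinv_l by lra; nra.
Qed.

Lemma exists_ratio_near a b r0 del :
  0 <= a < b -> a <= r0 <= b -> 0 < del ->
  exists n m : nat, (0 < n)%nat /\ (0 < m)%nat /\
    a < INR n / INR m < b /\ Rabs (INR n / INR m - r0) < del.
Proof.
  intros Hab Hr0 Hdel.
  destruct (exists_ratio_between (Rmax a (r0 - del)) (Rmin b (r0 + del))) as [n [m [Hn [Hm Hr]]]].
  - apply (Rle_trans _ a); [lra | apply Rmax_l].
  - apply Rmax_lub_lt; apply Rmin_glb_lt; lra.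
  - exists n, m. split; [exact Hn | split; [exact Hm |]].
    pose proof (Rmax_l a (r0 - del)). pose proof (Rmax_r a (r0 - del)).
    pose proof (Rmin_l b (r0 + del)). pose proof (Rmin_r b (r0 + del)).
    split; [lra | apply Rabs_def1; lra].
Qed.

Theorem theorem2p4 :
  forall a eps : R, tower_lo <= a <= tower_hi -> 0 < eps ->
  exists A : R,
    is_algebraic A /\ tower_lo <= A <= tower_hi /\ Rabs (A - a) < eps /\
    exists hA : R, Un_cv (tower A) hA /\ is_algebraic hA.
Proof.
  intros a eps Ha Heps.
  destruct (self_root_surjective a Ha) as [r0 [Hr0 <-]].
  assert (He : 0 < exp (-1) < exp 1) by (split; [apply exp_pos | apply exp_increasing; lra]).
  destruct (continuity_pt_near self_root r0 eps) as [del [Hdel Hnear]];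
    [apply self_root_continuous; lra | exact Heps |].
  destruct (exists_ratio_near (exp (-1)) (exp 1) r0 del) as [n [m [Hn [Hm [Hr Hdist]]]]];
    [lra | lra | exact Hdel |].
  exists (self_root (INR n / INR m)). split; [| split; [| split]].
  - apply is_algebraic_self_root_ratio; assumption.
  - apply self_root_range. lra.
  - apply Hnear. exact Hdist.
  - exists (INR n / INR m). split.
    + apply tower_self_root_cv. exact Hr.
    + apply is_algebraic_ratio. exact Hm.
Qed.
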